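(* Let $n$ and $r$ be positive integers with $n\geq 2r$. For positive integers $l,k$ define the rational number $$m_r(l,k):=\frac{1}{k}\left(lr-\sum_{i=1}^{k-1}i\binom{l}{i}\right).$$ Let $l$ be the minimal positive integer such that there exists a positive integer $k\leq l+1$ satisfying $$0\leq m_r(l,k)\leq\binom{l}{k}\quad\text{and}\quad \sum_{i=0}^{k-1}\binom{l}{i}+m_r(l,k)\geq n.$$ Then $b(\mathrm{S}_{n,r})=b(\mathrm{A}_{n+1,r})=l$.
   Context: For a permutation group $G$ acting on a set $\Omega$, a base is a subset $\mathcal{B}\subseteq\Omega$ whose pointwise stabiliser in $G$ is trivial, and $b(G)$ denotes the minimum size of a base. Write $[n]=\{1,\dots,n\}$. $\mathrm{S}_{n,r}$ denotes the symmetric group $\mathrm{S}_n$ acting naturally on the set of $r$-element subsets of $[n]$, and $\mathrm{A}_{n+1,r}$ denotes the alternating group $\mathrm{A}_{n+1}$ acting naturally on the set of $r$-element subsets of $[n+1]$. Binomial coefficients $\binom{l}{k}$ with $k>l$ are $0$. *)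

From mathcomp Require Import all_boot all_order all_algebra all_fingroup.
From mathcomp Require Import alt.
Set Implicit Arguments. Unset Strict Implicit. Unset Printing Implicit Defensive.
Import GRing.Theory Num.Theory.

Definition is_base (T : finType) (G : {set {perm T}}) (r : nat)
    (B : {set {set T}}) : Prop :=
  (forall A, A \in B -> #|A| = r) /\
  (forall g : {perm T}, g \in G -> (forall A, A \in B -> g @: A = A) -> g = 1%g).

Definition base_size_is (T : finType) (G : {set {perm T}}) (r l : nat) : Prop :=
  (exists B, is_base G r B /\ #|B| = l) /\
  (forall B, is_base G r B -> l <= #|B|).

Definition b_S_is (n r l : nat) : Prop := base_size_is [set: {perm 'I_n}] r l.
Definition b_A_is (n r l : nat) : Prop := base_size_is ('Alt_('I_n.+1))%g r l.

Definition m_r (r l k : nat) : rat :=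
  (((l * r)%:Z - (\sum_(1 <= i < k) i * 'C(l, i))%N%:Z)%:~R / k%:R)%R.

Definition cond_l (n r l : nat) : Prop :=
  exists k : nat, [/\ 0 < k, k <= l.+1,
    (0 <= m_r r l k)%R, (m_r r l k <= ('C(l, k))%:R)%R &
    (n%:R <= (\sum_(0 <= i < k) 'C(l, i))%N%:R + m_r r l k)%R].

From mathcomp Require Import all_boot all_order all_algebra all_fingroup alt zify.
Set Implicit Arguments. Unset Strict Implicit. Unset Printing Implicit Defensive.
Import GRing.Theory Num.Theory.

(* A set B of r-subsets gives every point x its signature, the set of members
   of B containing x.  Two points with the same signature are swapped by a
   transposition fixing B, so for a base of S_n the n signatures are distinct,
   and for A_{n+1} at most one pair of the n+1 points shares a signature.  The
   signatures thus form n distinct subsets of a #|B|-set whose sizes add up to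
   at most #|B| r; comparing with the n smallest subsets gives cond_l for #|B|.
   Conversely, under cond_l the small subsets of [l] (sizes < k, plus some of
   size k) form n-1 nonempty sets of total size at most l r; exchanging points
   between them equalises every degree to r, and reading the family as the
   signatures of n (or n+1) points yields a base of size at most l. *)

Lemma card_sets (I : finType) : #|{: {set I}}| = 2 ^ #|I|.
Proof.
by rewrite -cardsT -card_powerset; apply: eq_card => S; rewrite powersetE subsetT.
Qed.

Lemma sum_mem (I : finType) (S : {set I}) : \sum_(i : I) (i \in S) = #|S|.
Proof. by rewrite -sum1_card [RHS]big_mkcond. Qed.

Lemma card_set_sum (T : finType) (A : {set T}) (p : pred T) :
  #|[set x in A | p x]| = \sum_(x in A) p x.
Proof.
rewrite -sum1_card big_mkcond [RHS]big_mkcond /=; apply: eq_bigr => x _.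
by rewrite inE; case: (x \in A); case: (p x).
Qed.

Lemma ltn_sum (I : finType) (f g : I -> nat) i0 :
  (forall i, f i <= g i) -> f i0 < g i0 -> \sum_i f i < \sum_i g i.
Proof.
move=> le_fg lt_fg0; rewrite (ltn_leqif (leqif_sum (fun i _ => leqif_eq (le_fg i)))).
by apply: contraL lt_fg0 => /forallP/(_ i0)/eqP ->; rewrite ltnn.
Qed.

Lemma eq_const_of_sum_le (I : finType) (f : I -> nat) r :
  (forall i, r <= f i) -> \sum_i f i <= #|I| * r -> forall i, f i = r.
Proof.
move=> le_rf sum_le i; apply/eqP; rewrite eqn_leq le_rf andbT leqNgt.
apply: contraL sum_le => lt_fi; rewrite -ltnNge -sum_nat_const.
exact: ltn_sum lt_fi.
Qed.

Lemma leq_card_inj_on (T T' : finType) (f : T -> T') (A : {set T}) (B : {set T'}) :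
  {in A &, injective f} -> {in A, forall x, f x \in B} -> #|A| <= #|B|.
Proof.
move=> f_inj fAB; rewrite -(card_in_imset f_inj); apply: subset_leq_card.
by apply/subsetP => _ /imsetP[x xA ->]; apply: fAB.
Qed.

Lemma exists_subset_card (T : finType) (A : {set T}) m :
  m <= #|A| -> exists2 B : {set T}, B \subset A & #|B| = m.
Proof.
rewrite -bin_gt0 -cards_draws => /card_gt0P[B]; rewrite inE => /andP[BA /eqP Bm].
by exists B.
Qed.

Lemma leq_sum_subset (T : finType) (A B : {set T}) (f : T -> nat) :
  A \subset B -> \sum_(x in A) f x <= \sum_(x in B) f x.
Proof.
by move=> /subsetP AB; apply: (@sub_le_big _ addn _ leqnn (fun m n => leq_addr n m)) => x /AB.
Qed.

Definition binom_sum (L k : nat) := \sum_(0 <= i < k) 'C(L, i).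
Definition binom_wsum (L k : nat) := \sum_(1 <= i < k) i * 'C(L, i).

Lemma binom_wsumS L k : binom_wsum L k.+1 = binom_wsum L k + k * 'C(L, k).
Proof.
case: k => [|k]; first by rewrite /binom_wsum !big_geq.
by rewrite /binom_wsum big_nat_recr.
Qed.

Lemma sum_card_subsets (I : finType) (f : nat -> nat) :
  \sum_(S : {set I}) f #|S| = \sum_(0 <= i < #|I|.+1) 'C(#|I|, i) * f i.
Proof.
rewrite big_mkord.
have card_lt (S : {set I}) : #|S| < #|I|.+1 by rewrite ltnS max_card.
rewrite (partition_big (fun S => Ordinal (card_lt S)) xpredT) //=.
apply: eq_bigr => i _; rewrite (eq_bigr (fun _ => f i)) => [|S /eqP <-] //.
rewrite sum_nat_const -card_draws; congr (_ * _); apply: eq_card => S.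
by rewrite inE.
Qed.

Lemma sum_card_subsets_lt (I : finType) (g : nat -> nat) k : k <= #|I|.+1 ->
  \sum_(S : {set I} | #|S| < k) g #|S| = \sum_(0 <= i < k) 'C(#|I|, i) * g i.
Proof.
move=> kI; rewrite big_mkcond (sum_card_subsets _ (fun i => if i < k then g i else 0)).
rewrite (big_cat_nat (leq0n k) kI) /= [X in _ + X]big_nat_cond.
rewrite [X in _ + X]big1 ?addn0 => [|i /andP[/andP[ki _] _]]; last by rewrite ltnNge ki muln0.
by apply: eq_big_nat => i /andP[_ ->].
Qed.

Lemma binom_sum_subsets (I : finType) k : k <= #|I|.+1 ->
  binom_sum #|I| k = #|[set S : {set I} | #|S| < k]|.
Proof.
move=> kI; rewrite -sum1dep_card (sum_card_subsets_lt (fun _ => 1)) //.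
by apply: eq_bigr => i _; rewrite muln1.
Qed.

Lemma binom_wsum_subsets (I : finType) k : k <= #|I|.+1 ->
  binom_wsum #|I| k = \sum_(S : {set I} | #|S| < k) #|S|.
Proof.
move=> kI; rewrite (sum_card_subsets_lt id) // /binom_wsum.
case: k kI => [|k] kI; first by rewrite !big_geq.
rewrite [RHS]big_ltn // muln0 add0n; apply: eq_bigr => i _; exact: mulnC.
Qed.

Lemma sum_card_subsets_deficit (I : finType) k : k <= #|I|.+1 ->
  \sum_(S : {set I}) (k - #|S|) + binom_wsum #|I| k = binom_sum #|I| k * k.
Proof.
move=> kI; rewrite binom_wsum_subsets // binom_sum_subsets // -sum1dep_card big_distrl /=.
rewrite (bigID (fun S : {set I} => #|S| < k)) /= [X in _ + X + _]big1 => [|S]; last first.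
  by rewrite -leqNgt -subn_eq0 => /eqP.
by rewrite addn0 -big_split; apply: eq_bigr => S /ltnW /subnK; rewrite mul1n.
Qed.

Lemma sum_card_subsets_total (I : finType) :
  2 * \sum_(S : {set I}) #|S| = #|I| * 2 ^ #|I|.
Proof.
have sumC : \sum_(S : {set I}) #|S| = \sum_(S : {set I}) #|~: S|.
  by rewrite (reindex_inj (@setC_inj I)).
rewrite mul2n -addnn {2}sumC -big_split /=.
under eq_bigr do rewrite cardsC.
by rewrite sum_nat_const card_sets mulnC.
Qed.

Lemma exists_binom_threshold L m : 0 < m -> m <= binom_wsum L L.+1 ->
  exists k, [/\ 0 < k, k <= L, binom_wsum L k <= m & m <= binom_wsum L k.+1].
Proof.
move=> m_gt0 mQ.
have [k mQk kmin] := ex_minnP (ex_intro (fun k => m <= binom_wsum L k.+1) L mQ).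
case: k mQk kmin => [|k] mQk kmin.
  by move: mQk; rewrite /binom_wsum big_geq // leqn0 => /eqP m0; rewrite m0 in m_gt0.
exists k.+1; split=> //; first exact: kmin.
by rewrite ltnW // ltnNge; apply/negP => /kmin; rewrite ltnn.
Qed.

Lemma binom_wsum_all L : 2 * binom_wsum L L.+1 = L * 2 ^ L.
Proof.
have := sum_card_subsets_total ('I_L).
rewrite card_ord => <-; congr (2 * _).
have := binom_wsum_subsets (I := 'I_L) (k := L.+1).
rewrite card_ord => -> //.
by apply: eq_bigl => S; rewrite -[X in _ < X.+1](card_ord L) ltnS max_card.
Qed.

Section MrInequalities.
Variables (r L k : nat).
Hypothesis k_gt0 : 0 < k.

Let k_pos : (0 < k%:R :> rat)%R. Proof. by rewrite ltr0n. Qed.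

Lemma m_r_ge0E : (0 <= m_r r L k)%R = (binom_wsum L k <= L * r).
Proof.
rewrite /m_r -/(binom_wsum L k) ler_pdivlMr // mul0r ler0z.
by apply/idP/idP; lia.
Qed.

Lemma m_r_le_natE c : (m_r r L k <= c%:R)%R = (L * r <= binom_wsum L k + k * c).
Proof.
rewrite /m_r -/(binom_wsum L k) ler_pdivrMr // -natrM.
rewrite -[((c * k)%:R : rat)]/(((c * k)%:Z)%:~R : rat) ler_int.
by apply/idP/idP; lia.
Qed.

Lemma nat_le_add_m_rE n s :
  (n%:R <= s%:R + m_r r L k)%R = (n * k + binom_wsum L k <= s * k + L * r).
Proof.
rewrite /m_r -/(binom_wsum L k) -lerBlDl ler_pdivlMr // mulrBl -!natrM.
rewrite -[((n * k)%:R : rat)]/(((n * k)%:Z)%:~R : rat).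
rewrite -[((s * k)%:R : rat)]/(((s * k)%:Z)%:~R : rat) -intrB ler_int.
by apply/idP/idP; lia.
Qed.

End MrInequalities.

Definition cond_nat (n r L : nat) := exists k, [/\ 0 < k, k <= L.+1,
  binom_wsum L k <= L * r, L * r <= binom_wsum L k + k * 'C(L, k) &
  n * k + binom_wsum L k <= binom_sum L k * k + L * r].

Lemma cond_lE n r L : cond_l n r L <-> cond_nat n r L.
Proof.
by split=> -[k [k_gt0 kL h1 h2 h3]]; exists k;
  rewrite ?m_r_ge0E ?m_r_le_natE ?nat_le_add_m_rE // in h1 h2 h3 *.
Qed.

Lemma cond_of_light_family (I : finType) (F : {set {set I}}) n r :
  0 < r -> 2 * r <= n -> n <= #|F| -> \sum_(S in F) #|S| <= #|I| * r ->
  0 < #|I| /\ cond_nat n r #|I|.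
Proof.
move=> r_gt0 le2rn leFn wF.
have I_gt0 : 0 < #|I|.
  have := max_card F; rewrite card_sets; case: #|I| => // le1; lia.
split=> //.
(* k is the size threshold where the subsets of [I], taken by increasing size,
   reach total size #|I| r; it exists since all of them have total size
   #|I| 2^(#|I|-1) >= #|I| r. *)
have Lr_le : #|I| * r <= binom_wsum #|I| #|I|.+1.
  have := binom_wsum_all #|I|.
  have : 2 * r <= 2 ^ #|I|.
    by rewrite (leq_trans le2rn) // (leq_trans leFn) // -card_sets max_card.
  move/(leq_mul (leqnn #|I|)); lia.
have Lr_gt0 : 0 < #|I| * r by rewrite muln_gt0 I_gt0.
have [k [k_gt0 kI Qk Qk1]] := exists_binom_threshold Lr_gt0 Lr_le.
exists k; split; rewrite -?binom_wsumS //; first exact: leqW.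
have sum_deficit := sum_card_subsets_deficit (leqW kI).
have : n * k <= \sum_(S in F) (k - #|S|) + \sum_(S in F) #|S|.
  rewrite -big_split (leq_trans (leq_mul leFn (leqnn k))) // -sum_nat_const.
  by apply: leq_sum => S _ /=; lia.
have : \sum_(S in F) (k - #|S|) <= \sum_(S : {set I}) (k - #|S|).
  by rewrite [X in _ <= X](bigID (mem F)) leq_addr.
lia.
Qed.

Definition signature (T : finType) (B : {set {set T}}) (x : T) : {set {A | A \in B}} :=
  [set A : {A : {set T} | A \in B} | x \in val A].

Lemma sum_card_signature (T : finType) (B : {set {set T}}) r :
  (forall A, A \in B -> #|A| = r) -> \sum_(x : T) #|signature B x| = #|B| * r.
Proof.
move=> Br; under eq_bigr do rewrite -sum_mem.
rewrite exchange_big /= (eq_bigr (fun _ => r)) ?sum_nat_const ?card_sig // => A _.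
by rewrite -(Br _ (valP A)) -sum_mem; apply: eq_bigr => x _; rewrite inE.
Qed.

Lemma cond_of_injective_signature (T : finType) (B : {set {set T}}) (D : {set T}) n r :
  0 < r -> 2 * r <= n -> (forall A, A \in B -> #|A| = r) -> n <= #|D| ->
  {in D &, injective (signature B)} -> 0 < #|B| /\ cond_l n r #|B|.
Proof.
move=> r_gt0 le2rn Br leDn sig_inj; rewrite cond_lE -card_sig.
apply: (cond_of_light_family (F := signature B @: D)) => //.
  by rewrite card_in_imset.
rewrite big_imset // card_sig -(sum_card_signature Br).
by rewrite [X in _ <= X](bigID (mem D)) leq_addr.
Qed.

Lemma perm_imset_id (T : finType) (g : {perm T}) (A : {set T}) :
  (forall z, (g z \in A) = (z \in A)) -> g @: A = A.
Proof.
move=> gA; apply/eqP; rewrite eqEcard card_imset ?leqnn ?andbT; last exact: perm_inj.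
by apply/subsetP => _ /imsetP[z zA ->]; rewrite gA.
Qed.

Lemma tperm_signature_mem (T : finType) (B : {set {set T}}) x y A z :
  signature B x = signature B y -> A \in B -> (tperm x y z \in A) = (z \in A).
Proof.
move=> /setP /(_ (exist _ A _)) sigxy AB; have := sigxy AB; rewrite !inE /= => xyA.
by case: tpermP => [->|->|].
Qed.

Lemma cond_of_base_S n r B : 0 < r -> 2 * r <= n ->
  is_base [set: {perm 'I_n}] r B -> 0 < #|B| /\ cond_l n r #|B|.
Proof.
move=> r_gt0 le2rn [Br Bbase].
apply: (cond_of_injective_signature (D := setT)) => // [|x y _ _ sigxy].
  by rewrite cardsT card_ord.
have fixB A : A \in B -> tperm x y @: A = A.
  by move=> AB; apply: perm_imset_id => z; rewrite (tperm_signature_mem _ sigxy).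
by have /permP/(_ x) := Bbase _ (in_setT _) fixB; rewrite tpermL perm1.
Qed.

Lemma cond_of_base_A n r B : 0 < r -> 2 * r <= n ->
  is_base ('Alt_('I_n.+1))%g r B -> 0 < #|B| /\ cond_l n r #|B|.
Proof.
move=> r_gt0 le2rn [Br Bbase].
have [[x y] /andP[/= xy /eqP sigxy] | sig_inj] :=
  pickP (fun p : 'I_n.+1 * 'I_n.+1 => (p.1 != p.2) && (signature B p.1 == signature B p.2)).
  apply: (cond_of_injective_signature (D := [set~ y])) => //.
    by rewrite cardsC1 card_ord.
  move=> u v; rewrite !inE => uy vy siguv; apply/eqP; apply: contraT => uv.
  pose g := (tperm x y * tperm u v)%g.
  have gAlt : g \in ('Alt_('I_n.+1))%g by rewrite Alt_even odd_permM !odd_tperm xy uv.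
  have fixB A : A \in B -> g @: A = A.
    move=> AB; apply: perm_imset_id => z.
    by rewrite permM (tperm_signature_mem _ siguv) // (tperm_signature_mem _ sigxy).
  have /permP/(_ y) := Bbase _ gAlt fixB; rewrite permM tpermR perm1.
  by case: tpermP => [xu|xv|_ _] yx; move: uy vy xy; rewrite -?xu -?xv yx eqxx.
apply: (cond_of_injective_signature (D := setT)) => // [|x y _ _ sigxy].
  by rewrite cardsT card_ord.
by apply/eqP; apply: contraT => xy; have := sig_inj (x, y); rewrite /= xy sigxy eqxx.
Qed.

Section Degrees.
Variable I : finType.
Implicit Types (F : {set {set I}}) (S : {set I}).

Definition deg F (j : I) := \sum_(S in F) (j \in S).

Lemma sum_deg F : \sum_j deg F j = \sum_(S in F) #|S|.
Proof. by rewrite exchange_big; apply: eq_bigr => S _; rewrite sum_mem. Qed.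

Definition replace F S S' := S' |: (F :\ S).

Lemma card_replace F S S' : S \in F -> S' \notin F -> #|replace F S S'| = #|F|.
Proof.
by move=> SF S'F; rewrite cardsU1 !inE negb_and S'F orbT (cardsD1 S F) SF.
Qed.

Lemma deg_replace F S S' j : S \in F -> S' \notin F ->
  deg (replace F S S') j + (j \in S) = deg F j + (j \in S').
Proof.
move=> SF S'F; rewrite /deg big_setU1 /= ?(big_setD1 S SF) /=.
  by rewrite addnAC [RHS]addnAC [(j \in S) + _]addnC.
by rewrite !inE negb_and S'F orbT.
Qed.

Lemma sum_deg_replace F S S' : S \in F -> S' \notin F ->
  \sum_j deg (replace F S S') j + #|S| = \sum_j deg F j + #|S'|.
Proof.
by move=> SF S'F; rewrite -!sum_mem -!big_split; apply: eq_bigr => j _; apply: deg_replace.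
Qed.

Lemma exists_swap F j j' : deg F j' < deg F j ->
  exists S, [/\ S \in F, j \in S, j' \notin S & j' |: (S :\ j) \notin F].
Proof.
move=> lt_deg.
pose A := [set S in F | (j \in S) && (j' \notin S)].
pose C := [set S in F | (j' \in S) && (j \notin S)].
have degAC : deg F j + #|C| = deg F j' + #|A|.
  rewrite !card_set_sum /deg -!big_split; apply: eq_bigr => S _.
  by case: (j \in S); case: (j' \in S).
have [S /andP[] | swapF] := pickP [pred S in A | j' |: (S :\ j) \notin F].
  by rewrite inE => /and3P[SF jS j'S] swapS; exists S.
have jj' : j != j' by apply: contraTneq lt_deg => ->; rewrite ltnn.
have swapK S : S \in A -> j |: ((j' |: (S :\ j)) :\ j') = S.
  rewrite inE => /and3P[_ jS j'S]; apply/setP => x; rewrite !inE.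
  by case: (eqVneq x j) => [->|xj] //=; case: (eqVneq x j') => [->|] //=; rewrite (negPf j'S).
have : #|A| <= #|C|.
  apply: (@leq_card_inj_on _ _ (fun S => j' |: (S :\ j))) => [S T SA TA eqST|S SA].
    by rewrite -(swapK S SA) -(swapK T TA) eqST.
  have := swapF S; rewrite /= SA /= => /negbFE swapSF.
  by rewrite inE swapSF !inE eqxx (negPf jj') eqxx.
lia.
Qed.

Lemma exists_add F j : 2 * deg F j < #|F| ->
  exists S, [/\ S \in F, j \notin S & j |: S \notin F].
Proof.
move=> lt_deg.
pose A := [set S in F | j \notin S].
have degA : deg F j + #|A| = #|F|.
  rewrite card_set_sum /deg -big_split -sum1_card; apply: eq_bigr => S _.
  by case: (j \in S).
have [S /andP[] | addF] := pickP [pred S in A | j |: S \notin F].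
  by rewrite inE => /andP[SF jS] addS; exists S.
have : #|A| <= deg F j.
  rewrite /deg -card_set_sum.
  apply: (@leq_card_inj_on _ _ (fun S => j |: S)) => [S T SA TA eqST|S SA].
    by move: SA TA; rewrite !inE => /andP[_ /setU1K <-] /andP[_ /setU1K <-]; rewrite eqST.
  have := addF S; rewrite /= SA /= => /negbFE addSF.
  by rewrite inE addSF setU11.
lia.
Qed.
End Degrees.

Section Balancing.
Variables (I : finType) (r : nat).
Implicit Types (F : {set {set I}}) (S : {set I}).

Definition deg_deficit F := \sum_(j : I) (r - deg F j).

Lemma deg_deficit_replace_lt F S S' j' :
  S \in F -> S' \notin F -> j' \notin S -> j' \in S' -> deg F j' < r ->
  (forall i, i \in S -> i \notin S' -> r < deg F i) ->
  deg_deficit (replace F S S') < deg_deficit F.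
Proof.
move=> SF S'F j'S j'S' lt_j' gt_S; apply: (ltn_sum (i0 := j')) => [i|].
  have := deg_replace i SF S'F.
  case iS: (i \in S); case iS': (i \in S') => /= e; try lia.
  by have := gt_S i iS; rewrite iS' => /(_ isT); lia.
by have := deg_replace j' SF S'F; rewrite (negPf j'S) j'S' /=; lia.
Qed.

(* A point j of degree > r is traded for j' in some set avoiding j'; if there
   is none, the total size is below #|I| r and j' is added to some set. *)
Lemma balance_step F j' :
  2 * r <= #|F|.+1 -> set0 \notin F -> \sum_j deg F j <= #|I| * r -> deg F j' < r ->
  exists F', [/\ #|F'| = #|F|, set0 \notin F', \sum_j deg F' j <= #|I| * r
                & deg_deficit F' < deg_deficit F].
Proof.
move=> leFr F0 sum_le lt_j'.
have set0_replace S S' : j' \in S' -> set0 \notin replace F S S'.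
  move=> j'S'; rewrite !inE negb_or negb_and F0 orbT andbT.
  by apply: contraTneq j'S' => <-; rewrite inE.
have [j lt_j | le_r] := pickP (fun j => r < deg F j).
  have [S [SF jS j'S swapF]] := exists_swap (ltn_trans lt_j' lt_j).
  have j'_swap : j' \in j' |: (S :\ j) by rewrite setU11.
  exists (replace F S (j' |: (S :\ j))); split; rewrite ?card_replace ?set0_replace //.
  - have := sum_deg_replace SF swapF.
    rewrite cardsU1 !inE negb_and j'S orbT /= (cardsD1 j S) jS.
    by move=> /eqP; rewrite eqn_add2r => /eqP ->; exact: sum_le.
  - apply: (deg_deficit_replace_lt (j' := j')) => // i iS.
    by rewrite !inE iS andbT negb_or => /andP[_ /negPn /eqP ->].
have sum_lt : \sum_j deg F j < #|I| * r.
  by rewrite -sum_nat_const; apply: (ltn_sum (i0 := j')) => // i; rewrite leqNgt le_r.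
have [|S [SF j'S addF]] := exists_add (F := F) (j := j'); first lia.
have j'_add : j' \in j' |: S by rewrite setU11.
exists (replace F S (j' |: S)); split; rewrite ?card_replace ?set0_replace //.
  by have := sum_deg_replace SF addF; rewrite cardsU1 (negPf j'S); lia.
by apply: (deg_deficit_replace_lt (j' := j')) => // i iS; rewrite !inE iS orbT.
Qed.

Lemma balance F : 2 * r <= #|F|.+1 -> set0 \notin F -> \sum_j deg F j <= #|I| * r ->
  exists F', [/\ #|F'| = #|F|, set0 \notin F' & forall j, deg F' j = r].
Proof.
have [m lt_m] := ubnP (deg_deficit F); elim: m F lt_m => // m IH F lt_m leFr F0 sum_le.
have [j' lt_j' | ge_r] := pickP (fun j => deg F j < r).
  have [F' [F'F F'0 sum'_le lt']] := balance_step leFr F0 sum_le lt_j'.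
  rewrite -F'F; apply: IH (leq_trans lt' (ltnSE lt_m)) _ F'0 sum'_le.
  by rewrite F'F.
exists F; split=> //; apply: eq_const_of_sum_le sum_le => j.
by rewrite leqNgt ge_r.
Qed.

End Balancing.

Lemma light_family_of_cond (I : finType) n r : cond_nat n r #|I| ->
  exists F : {set {set I}}, [/\ #|F| = n.-1, set0 \notin F & \sum_(S in F) #|S| <= #|I| * r].
Proof.
(* F is chosen among the sets of size < k and n - binom_sum sets of size k,
   set0 excluded. *)
case=> k [k_gt0 kI Qk_le Qk_ge nk_le].
pose U := [set S : {set I} | #|S| < k].
have [W WV Wc] : exists2 W : {set {set I}},
    W \subset [set S : {set I} | #|S| == k] & #|W| = n - binom_sum #|I| k.
  apply: exists_subset_card; rewrite card_draws leq_subLR -(leq_pmul2r k_gt0) mulnDl.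
  lia.
have UW : [disjoint U & W].
  rewrite -setI_eq0; apply/eqP/setP => S; rewrite !inE; apply/negP => /andP[ltSk].
  by move/(subsetP WV); rewrite inE => /eqP eqSk; rewrite eqSk ltnn in ltSk.
have card_UW : #|U :|: W| = binom_sum #|I| k + (n - binom_sum #|I| k).
  by apply/eqP; rewrite -Wc binom_sum_subsets // (eq_leqif (leq_card_setU U W)).
have sum_UW : \sum_(S in U :|: W) #|S| = binom_wsum #|I| k + #|W| * k.
  rewrite (eq_bigl [predU U & W]) => [|S]; last by rewrite inE.
  rewrite bigU // binom_wsum_subsets // -sum_nat_const.
  congr (_ + _); first by apply: eq_bigl => S; rewrite inE.
  by apply: eq_bigr => S /(subsetP WV); rewrite inE => /eqP.
have [F FG Fc] : exists2 F : {set {set I}}, F \subset (U :|: W) :\ set0 & #|F| = n.-1.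
  apply: exists_subset_card; have := cardsD1 set0 (U :|: W).
  rewrite card_UW !inE cards0 k_gt0 add1n /= => /(congr1 predn) /= <-; lia.
exists F; split=> //.
  by apply/negP => /(subsetP FG); rewrite setD11.
rewrite (leq_trans (leq_sum_subset _ FG)) // (leq_trans (leq_sum_subset _ (subsetDl _ _))) //.
by rewrite sum_UW Wc mulnBl; lia.
Qed.

Lemma balanced_family_of_cond l n r : 0 < r -> 2 * r <= n -> cond_l n r l ->
  exists F : {set {set 'I_l}}, [/\ #|F| = n.-1, set0 \notin F & forall j, deg F j = r].
Proof.
move=> r_gt0 le2rn /cond_lE; rewrite -[l in cond_nat _ _ l]card_ord.
case/light_family_of_cond => F [Fc F0 wF]; rewrite -Fc.
by apply: balance F0 _; rewrite ?sum_deg // Fc; lia.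
Qed.

Lemma perm_on_pair_fix (T : finType) (a b : T) (g : {perm T}) :
  perm_on [set a; b] g -> g a = a -> g = 1%g.
Proof.
move=> gon ga; apply: (@perm_on_id _ _ [set b]); last by rewrite cards1.
apply/subsetP => x gx; have := subsetP gon x gx; rewrite !inE => /orP[/eqP xa|//].
by move: gx; rewrite inE xa ga eqxx.
Qed.

Lemma perm_on_pair_even (T : finType) (a b : T) (g : {perm T}) :
  perm_on [set a; b] g -> ~~ odd_perm g -> g = 1%g.
Proof.
move=> gon; have [ga|ga] := eqVneq (g a) a; first by move=> _; exact: perm_on_pair_fix gon ga.
have gab : g a = b.
  by have := perm_closed a gon; rewrite !inE eqxx (negPf ga) => /eqP.
have gt1 : (g * tperm a b = 1)%g.
  by apply: perm_on_pair_fix (perm_onM gon (tperm_on a b)) _; rewrite permM gab tpermR.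
have /eqP ginv : (g^-1 == tperm a b)%g by rewrite eq_invg_mul gt1.
by rewrite -odd_permV ginv odd_tperm eq_sym -gab ga.
Qed.

Lemma perm_on_pair_of_invariant (T : finType) (X : Type) (c : T -> X) (g : {perm T}) a b :
  a != b -> c a = c b -> {in [set~ b] &, injective c} -> (forall x, c (g x) = c x) ->
  perm_on [set a; b] g.
Proof.
move=> ab cab c_inj cg; apply/subsetP => x; rewrite !inE; apply: contraR.
rewrite negb_or => /andP[xa xb].
have gxb : g x != b.
  apply: contraNneq xa => gxb; apply/eqP/c_inj; rewrite ?inE //.
  by rewrite cab -gxb cg.
by apply/eqP/c_inj; rewrite ?inE.
Qed.

Section BaseOfFamily.
Variables (l r N : nat) (F : {set {set 'I_l}}).

(* Point x is coded by the x-th set of set0 :: enum F.  The points beyond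
   #|F| also get set0 (the default of nth): with N = #|F|.+2 this is the one
   signature collision allowed in A_{n+1}. *)
Definition family_code (x : 'I_N) := nth set0 (set0 :: enum F) x.
Definition base_of_family := [set [set x | j \in family_code x] | j : 'I_l].

Lemma card_base_of_family : #|base_of_family| <= l.
Proof. by rewrite (leq_trans (leq_imset_card _ _)) // card_ord. Qed.

Hypotheses (F0 : set0 \notin F) (Fdeg : forall j, deg F j = r) (FN : #|F| < N).

Lemma base_of_family_card A : A \in base_of_family -> #|A| = r.
Proof.
case/imsetP => j _ ->; rewrite -sum_mem -(Fdeg j).
under eq_bigr do rewrite inE.
rewrite -(big_mkord xpredT (fun x => (j \in nth set0 (set0 :: enum F) x) : nat)).
have size_code : size (set0 :: enum F) = #|F|.+1 by rewrite /= -cardE.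
rewrite (big_cat_nat (leq0n _) FN) /= [X in _ + X]big_nat_cond.
rewrite [X in _ + X]big1 ?addn0 => [|x /andP[/andP[Fx _] _]]; last first.
  by rewrite nth_default ?size_code // inE.
rewrite -size_code -(big_nth set0 xpredT (fun S => (j \in S) : nat)).
by rewrite big_cons inE add0n big_enum.
Qed.

Lemma family_code_invariant (g : {perm 'I_N}) :
  (forall A, A \in base_of_family -> g @: A = A) ->
  forall x, family_code (g x) = family_code x.
Proof.
move=> gB x; apply/setP => j.
have /setP/(_ (g x)) := gB _ (imset_f _ (isT : j \in predT)).
by rewrite (mem_imset _ _ perm_inj) !inE.
Qed.

Lemma family_code_inj : {in [pred x : 'I_N | x <= #|F|] &, injective family_code}.
Proof.
move=> x y xF yF eqxy; apply: val_inj; apply/eqP.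
rewrite -(nth_uniq set0 (s := set0 :: enum F)) /= -?cardE ?ltnS //; first exact/eqP.
by rewrite mem_enum F0 enum_uniq.
Qed.

End BaseOfFamily.

Section BaseOfBalancedFamily.
Variables (l n r : nat) (F : {set {set 'I_l}}).
Hypotheses (n_gt0 : 0 < n) (Fc : #|F| = n.-1) (F0 : set0 \notin F)
  (Fdeg : forall j, deg F j = r).

Let F_lt_n : #|F| < n. Proof. by rewrite Fc prednK. Qed.

Lemma base_of_family_S : is_base [set: {perm 'I_n}] r (base_of_family n F).
Proof.
split=> [A|g _ gB]; first exact: base_of_family_card.
have leF (x : 'I_n) : x <= #|F| by rewrite -ltnS Fc prednK.
apply/permP => x; rewrite perm1; apply: (family_code_inj F0); rewrite ?inE ?leF //.
exact (family_code_invariant gB x).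
Qed.

Lemma base_of_family_A : is_base ('Alt_('I_n.+1))%g r (base_of_family n.+1 F).
Proof.
split=> [A AB|g gAlt gB]; first exact: base_of_family_card Fdeg (leqW F_lt_n) _ AB.
apply: (@perm_on_pair_even _ ord0 ord_max); last by rewrite -Alt_even.
have leF (x : 'I_n.+1) : x != ord_max -> x <= #|F|.
  by rewrite Fc -val_eqE /= => xn; have := ltn_ord x; lia.
apply: (perm_on_pair_of_invariant (c := @family_code _ n.+1 F)).
- by rewrite -val_eqE /= eq_sym -lt0n.
- by rewrite /family_code [RHS]nth_default // /= -cardE.
- move=> x y; rewrite !inE => /leF xF /leF yF.
  by apply: (family_code_inj F0); rewrite inE.
- exact (family_code_invariant gB).
Qed.

End BaseOfBalancedFamily.

Theorem theorem1p1 (n r l : nat) :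
  0 < r -> 2 * r <= n ->
  0 < l -> cond_l n r l -> (forall l', 0 < l' -> l' < l -> ~ cond_l n r l') ->
  b_S_is n r l /\ b_A_is n r l.
Proof.
move=> r_gt0 le2rn _ hl hmin.
have n_gt0 : 0 < n by lia.
have l_min L : 0 < L /\ cond_l n r L -> l <= L.
  by case=> L_gt0 hL; rewrite leqNgt; apply/negP => /hmin; apply.
have [F [Fc F0 Fdeg]] := balanced_family_of_cond r_gt0 le2rn hl.
have lower_S B : is_base [set: {perm 'I_n}] r B -> l <= #|B|.
  by move/(cond_of_base_S r_gt0 le2rn); apply: l_min.
have lower_A B : is_base ('Alt_('I_n.+1))%g r B -> l <= #|B|.
  by move/(cond_of_base_A r_gt0 le2rn); apply: l_min.
have base_S := base_of_family_S n_gt0 Fc F0 Fdeg.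
have base_A := base_of_family_A n_gt0 Fc F0 Fdeg.
split; split=> //.
- exists (base_of_family n F); split=> //; apply/eqP.
  by rewrite eqn_leq card_base_of_family lower_S.
- exists (base_of_family n.+1 F); split=> //; apply/eqP.
  by rewrite eqn_leq card_base_of_family lower_A.
Qed.
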